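(* Let $A,B\in\mathbb{Z}$ satisfy $|A|\leq B$ and $2|A|\geq B+3$, and let $T$ be the tile defined below and $c(T)=-T$. Then $T\cap c(T)$ contains at least two points.
   Context: Let $a(x,y)=(x+1,y)$ and $c(x,y)=(-x,-y)$. Let $g(\mathbf{x})=\begin{pmatrix}0&-B\\1&-A\end{pmatrix}\mathbf{x}+\left(\frac{B-1}{2},0\right)^T$, $\mathcal{D}=\{id,a,\dots,a^{B-2},c\}$ (note $B\geq 3$ under the hypotheses), and let $T$ be the unique nonempty compact set with $g(T)=\bigcup_{\delta\in\mathcal{D}}\delta(T)$. *)

From HB Require Import structures.
From mathcomp Require Import all_boot all_order all_algebra.
From mathcomp Require Import all_classical all_reals all_analysis.
Import numFieldNormedType.Exports.
Set Implicit Arguments. Unset Strict Implicit. Unset Printing Implicit Defensive.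
Import Order.TTheory GRing.Theory Num.Theory.
Local Open Scope classical_set_scope.
Local Open Scope ring_scope.

Definition gmap (R : realType) (A B : int) (p : R * R) : R * R :=
  (0 * p.1 - B%:~R * p.2 + (B%:~R - 1) / 2, p.1 - A%:~R * p.2).

(* a(x,y) = (x+1,y), so a^k(x,y) = (x+k,y) *)
Definition a_pow (R : realType) (k : nat) (p : R * R) : R * R :=
  (p.1 + k%:R, p.2).

Definition cmap (R : realType) (p : R * R) : R * R := (- p.1, - p.2).

(* Digit set D = {id, a, ..., a^(B-2), c}; set equation g(T) = U_{d in D} d(T). *)
Definition tile_equation (R : realType) (A B : int) (T : set (R * R)) : Prop :=
  gmap A B @` T =
  (\bigcup_(k in [set k : nat | (k%:Z <= B - 2)%R]) (@a_pow R k @` T))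
    `|` (@cmap R @` T).

Definition is_tile (R : realType) (A B : int) (T : set (R * R)) : Prop :=
  T !=set0 /\ compact T /\ tile_equation A B T.

(* Write g(x) = M x + v.  For the quadratic form
   Q(u) = B u1^2 - 2A u1 u2 + (B+1) u2^2 one has
   Q(M u) = Q(u) + u1^2 + (B^3 - A^2 (B-1) - B - 1) u2^2, and the last
   coefficient is positive when |A| <= B and B >= 2.  So Q(M u) <= Q(u) forces
   u = 0, while every digit preserves Q-distances.  Hence a fixed point x of
   g^-1 o d lies in T: a point t of T minimising Q(x - t) can only be x itself.
   For B >= 4 the fixed points z_k of g^-1 o a^k (0 <= k <= B-2) satisfy
   c(z_k) = z_(B-1-k), so z_1 and z_2 lie in T and in c(T).  For B = 3, i.e.
   A = 3 or A = -3, besides z_1 = 0 a short orbit computation puts +-(1/3, 0),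
   resp. +-(0, 1/9), in T. *)
From mathcomp Require Import all_boot all_order all_algebra.
From mathcomp Require Import all_classical all_reals all_analysis.
From mathcomp Require Import ring lra zify.
Import Order.TTheory GRing.Theory Num.Theory.
Import numFieldNormedType.Exports.

Set Implicit Arguments.
Unset Strict Implicit.
Unset Printing Implicit Defensive.
Local Open Scope classical_set_scope.
Local Open Scope ring_scope.

Lemma compact_mem_of_descent (X : topologicalType) (R : realType)
    (T : set X) (phi : X -> R) (x : X) :
  T !=set0 -> compact T -> continuous phi ->
  (forall t, T t -> exists2 s, T s & s = x \/ phi s < phi t) -> T x.
Proof.
move=> T0 cT phi_cont descent.
have [c /set_mem Tc c_min] :=
  compact_EVT_min T0 cT (continuous_subspaceT phi_cont).
have [s Ts [<- //|lt_sc]] := descent c Tc.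
by have := c_min s (mem_set Ts); rewrite leNgt lt_sc.
Qed.

Section LyapunovForm.
Variables (R : realType) (a b : R).

Definition glin (u : R * R) : R * R := (- b * u.2, u.1 - a * u.2).

Definition lyap (u : R * R) : R :=
  b * u.1 ^+ 2 - 2 * a * (u.1 * u.2) + (b + 1) * u.2 ^+ 2.

Definition lyap_gap : R := b ^+ 3 - a ^+ 2 * (b - 1) - b - 1.

Lemma lyap_glin u : lyap (glin u) = lyap u + u.1 ^+ 2 + lyap_gap * u.2 ^+ 2.
Proof. by rewrite /lyap /lyap_gap /=; ring. Qed.

Lemma lyapN u : lyap (- u) = lyap u.
Proof. by rewrite /lyap /=; ring. Qed.

Lemma continuous_lyap : continuous lyap.
Proof.
move=> u.
have c1 : (fun v : R * R => v.1) @ u --> u.1 by exact: cvg_fst.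
have c2 : (fun v : R * R => v.2) @ u --> u.2 by exact: cvg_snd.
apply: cvgD; first apply: cvgB.
- by apply: cvgM; [exact: cvg_cst | exact: cvgM].
- by apply: cvgM; [exact: cvg_cst | exact: cvgM].
- by apply: cvgM; [exact: cvg_cst | exact: cvgM].
Qed.

Lemma lyap_gap_gt0 : 2 <= b -> `|a| <= b -> 0 < lyap_gap.
Proof.
move=> b2 ab; have a2 : a ^+ 2 <= b ^+ 2.
  by rewrite -real_normK ?num_real // lerXn2r ?nnegrE // (le_trans _ ab).
rewrite /lyap_gap; nra.
Qed.

Lemma lyap_glin_le u : 0 < lyap_gap -> lyap (glin u) <= lyap u -> u = 0.
Proof.
rewrite lyap_glin => gap_gt0 le_u.
have u1_sq : 0 <= u.1 ^+ 2 := sqr_ge0 _.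
have u2_sq : 0 <= u.2 ^+ 2 := sqr_ge0 _.
have u2_0 : u.2 = 0 by apply/eqP; rewrite -sqrf_eq0; apply/eqP; nra.
have u1_0 : u.1 = 0 by apply/eqP; rewrite -sqrf_eq0; apply/eqP; nra.
by case: u u1_0 u2_0 {le_u u1_sq u2_sq} => ? ? /= -> ->.
Qed.

End LyapunovForm.

Section Tile.
Variables (R : realType) (A B : int) (T : set (R * R)).

Local Notation a := (A%:~R : R).
Local Notation b := (B%:~R : R).
Local Notation g := (@gmap R A B).

Lemma gmapB p q : g p - g q = glin a b (p - q).
Proof. by rewrite /gmap /glin; congr pair => /=; ring. Qed.

Lemma gmap_inj : b != 0 -> injective g.
Proof.
move=> b_neq0 p q gpq; apply/eqP; rewrite -subr_eq0; apply/eqP.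
have : glin a b (p - q) = 0 by rewrite -gmapB gpq subrr.
case: (p - q) => u1 u2 [] /eqP.
by rewrite mulNr oppr_eq0 mulf_eq0 (negbTE b_neq0) => /eqP ->; rewrite mulr0 subr0 => ->.
Qed.

Definition digit (d : R * R -> R * R) : Prop :=
  (exists2 k : nat, (k%:Z <= B - 2)%R & d = a_pow k) \/ d = @cmap R.

Lemma digit_lyapB d p q : digit d -> lyap a b (d p - d q) = lyap a b (p - q).
Proof.
case=> [[k _ ->]|->]; last first.
  have -> : cmap p - cmap q = - (p - q) by rewrite /cmap; congr pair => /=; ring.
  exact: lyapN.
by congr lyap; rewrite /a_pow; congr pair => /=; ring.
Qed.

Lemma digit_a_pow k : (k%:Z <= B - 2)%R -> digit (a_pow k).
Proof. by move=> hk; left; exists k. Qed.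

Lemma digit_cmap : digit (@cmap R).
Proof. by right. Qed.

Hypothesis tileT : is_tile A B T.

Lemma tile_preimage d t : digit d -> T t -> exists2 s, T s & g s = d t.
Proof.
move=> dd Tt; have [_ [_ tile_eq]] := tileT.
have : (g @` T) (d t).
  by rewrite tile_eq; case: dd => [[k hk ->]|->]; [left; exists k => //| right]; exists t.
by case=> s Ts gs; exists s.
Qed.

Lemma tile_closed d y s : b != 0 -> digit d -> T y -> g s = d y -> T s.
Proof.
move=> b_neq0 dd Ty gs.
have [s' Ts' gs'] := tile_preimage dd Ty.
by rewrite (gmap_inj b_neq0 (etrans gs (esym gs'))).
Qed.

Lemma tile_digit_fixpoint d x :
  0 < lyap_gap a b -> digit d -> g x = d x -> T x.
Proof.
move=> gap_gt0 dd gx; have [T0 [cT _]] := tileT.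
apply: (@compact_mem_of_descent _ _ T (lyap a b \o (fun t => x - t))) => //.
  move=> t; apply: continuous_comp; last exact: continuous_lyap.
  by apply: cvgB; [exact: cvg_cst | exact: cvg_id].
move=> t Tt; have [s Ts gs] := tile_preimage dd Tt.
exists s => //=; have [|le_ts] := ltP (lyap a b (x - s)) (lyap a b (x - t)).
  by right.
left; have : lyap a b (glin a b (x - s)) <= lyap a b (x - s).
  by rewrite -gmapB gx gs digit_lyapB.
by move/(lyap_glin_le gap_gt0)/eqP; rewrite subr_eq0 => /eqP.
Qed.

Definition fixpt_a_pow (k : nat) : R * R :=
  let c := k%:R - (b - 1) / 2 in (- (a + 1) * c / (a + b + 1), - c / (a + b + 1)).

Lemma gmap_fixpt_a_pow k : a + b + 1 != 0 -> g (fixpt_a_pow k) = a_pow k (fixpt_a_pow k).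
Proof. by move=> D_neq0; rewrite /gmap /a_pow /fixpt_a_pow; congr pair => /=; field. Qed.

Lemma cmap_fixpt_a_pow k j : (k + j)%:Z = B - 1 -> cmap (fixpt_a_pow k) = fixpt_a_pow j.
Proof.
move=> kjB; have kj : k%:R + j%:R = b - 1 :> R.
  by rewrite -natrD -[(k + j)%:R]/(((k + j)%:Z)%:~R : R) kjB rmorphB.
have cj : j%:R - (b - 1) / 2 = - (k%:R - (b - 1) / 2) :> R by lra.
by rewrite /cmap /fixpt_a_pow cj; congr pair => /=; ring.
Qed.

Lemma tile_meet_fixpt_a_pow k j :
    0 < lyap_gap a b -> a + b + 1 != 0 ->
    (k%:Z <= B - 2)%R -> (j%:Z <= B - 2)%R -> (k + j)%:Z = B - 1 ->
  (T `&` (@cmap R @` T)) (fixpt_a_pow k).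
Proof.
move=> gap_gt0 D_neq0 hk hj kjB.
have Tfix i : (i%:Z <= B - 2)%R -> T (fixpt_a_pow i).
  move=> hi; apply: (tile_digit_fixpoint gap_gt0 (digit_a_pow hi)).
  exact: gmap_fixpt_a_pow.
split; first exact: Tfix.
by exists (fixpt_a_pow j); [exact: Tfix | rewrite (cmap_fixpt_a_pow (j := k)) // addnC].
Qed.

Lemma two_sym_points_Bge4 :
    (4 <= B)%R -> 0 < lyap_gap a b -> a + b + 1 != 0 ->
  exists p q : R * R, p <> q /\
    (T `&` (@cmap R @` T)) p /\ (T `&` (@cmap R @` T)) q.
Proof.
move=> B4 gap_gt0 D_neq0; exists (fixpt_a_pow 1), (fixpt_a_pow 2); split.
  case=> _ /(congr1 ( *%R^~ (a + b + 1))); rewrite !divfK //; lra.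
split.
- by apply: (tile_meet_fixpt_a_pow (j := `|B - 2|%N)) => //; lia.
- by apply: (tile_meet_fixpt_a_pow (j := `|B - 3|%N)) => //; lia.
Qed.

End Tile.

Lemma two_sym_points_B3 (R : realType) (A : int) (T : set (R * R)) :
    A = 3 \/ A = -3 -> is_tile A 3 T ->
  exists p q : R * R, p <> q /\
    (T `&` (@cmap R @` T)) p /\ (T `&` (@cmap R @` T)) q.
Proof.
move=> A3 tileT.
have gap_gt0 : 0 < lyap_gap (A%:~R : R) (3 : int)%:~R.
  by case: A3 => ->; rewrite /lyap_gap; lra.
have b_neq0 : ((3 : int)%:~R : R) != 0 by rewrite intr_eq0.
have d0 := @digit_a_pow R 3 0 isT; have d1 := @digit_a_pow R 3 1 isT.
have dc := @digit_cmap R 3.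
have T00 : T (0, 0).
  apply: (tile_digit_fixpoint tileT gap_gt0 d1).
  by case: A3 => ->; rewrite /gmap /a_pow; congr pair => /=; lra.
suff [p p_neq0 [Tp Tmp]] : exists2 p : R * R, p != 0 & T p /\ T (- p).
  exists 0, p; split; first by move=> p0; move: p_neq0; rewrite -p0 eqxx.
  split; split => //; first by exists 0 => //; rewrite /cmap /= oppr0.
  by exists (- p) => //; rewrite /cmap /= !opprK; case: (p).
case: A3 => A3; subst A.
- have T1 : T (1, 1/3).
    apply: (tile_closed tileT b_neq0 d0 T00).
    by rewrite /gmap /a_pow; congr pair => /=; lra.
  have T2 : T (1/3, 0).
    apply: (tile_closed tileT b_neq0 d0 T1).
    by rewrite /gmap /a_pow; congr pair => /=; lra.
  have T3 : T (2, 1).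
    apply: (tile_digit_fixpoint tileT gap_gt0 dc).
    by rewrite /gmap /cmap; congr pair => /=; lra.
  have T4 : T (0, -1/3).
    apply: (tile_closed tileT b_neq0 d0 T3).
    by rewrite /gmap /a_pow; congr pair => /=; lra.
  have T5 : T (-1/3, 0).
    apply: (tile_closed tileT b_neq0 d1 T4).
    by rewrite /gmap /a_pow; congr pair => /=; lra.
  exists (1/3, 0); first by apply/eqP => /(congr1 fst) /=; lra.
  split=> //; suff -> : - (1/3, 0) = (-1/3, 0) :> R * R by [].
  by apply: injective_projections => /=; lra.
- have T1 : T (-2, 1).
    apply: (tile_digit_fixpoint tileT gap_gt0 d0).
    by rewrite /gmap /a_pow; congr pair => /=; lra.
  have T2 : T (-1, 2/3).
    apply: (tile_closed tileT b_neq0 d1 T1).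
    by rewrite /gmap /a_pow; congr pair => /=; lra.
  have T3 : T (-1/3, 1/3).
    apply: (tile_closed tileT b_neq0 d1 T2).
    by rewrite /gmap /a_pow; congr pair => /=; lra.
  have T4 : T (0, 1/9).
    apply: (tile_closed tileT b_neq0 d1 T3).
    by rewrite /gmap /a_pow; congr pair => /=; lra.
  have T5 : T (0, -1/3).
    apply: (tile_closed tileT b_neq0 dc T1).
    by rewrite /gmap /cmap; congr pair => /=; lra.
  have T6 : T (-4/3, 1/3).
    apply: (tile_closed tileT b_neq0 d0 T5).
    by rewrite /gmap /a_pow; congr pair => /=; lra.
  have T7 : T (0, -1/9).
    apply: (tile_closed tileT b_neq0 dc T6).
    by rewrite /gmap /cmap; congr pair => /=; lra.
  exists (0, 1/9); first by apply/eqP => /(congr1 snd) /=; lra.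
  split=> //; suff -> : - (0, 1/9) = (0, -1/9) :> R * R by [].
  by apply: injective_projections => /=; lra.
Qed.

Theorem lemma7p1 (R : realType) (A B : int) (T : set (R * R)) :
  `|A| <= B -> B + 3 <= 2 * `|A| -> is_tile A B T ->
  exists p q : R * R, p <> q /\
    (T `&` (@cmap R @` T)) p /\ (T `&` (@cmap R @` T)) q.
Proof.
move=> AB BA tileT.
have [[B3 A3]|B4] : (B = 3 /\ (A = 3 \/ A = -3)) \/ (4 <= B).
  by case: (lerP 0 A) => A0;
    [rewrite ger0_norm in AB BA | rewrite ltr0_norm in AB BA]; lia.
  by rewrite B3 in tileT; exact: two_sym_points_B3 A3 tileT.
have ab : `|A%:~R| <= B%:~R :> R by rewrite -intr_norm ler_int.
have b2 : 2 <= B%:~R :> R by rewrite (_ : 2 = 2%:~R) // ler_int; lia.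
have D_gt0 : 0 < A%:~R + B%:~R + 1 :> R.
  by move: ab; rewrite ler_norml => /andP[]; lra.
exact: two_sym_points_Bge4 tileT B4 (lyap_gap_gt0 b2 ab) (lt0r_neq0 D_gt0).
Qed.
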